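(* Let $x_1,\dots,x_n$ be observations, $\Theta\subset\mathbb{R}^{N_\theta}$, and $g(x,\theta)\in\mathbb{R}^{N_g}$ a moment function; write $g_i=g(x_i,\theta)$ and $\hat g=n^{-1}\sum_i g_i$. The exponentially tilted empirical likelihood (ETEL) estimator $\hat\theta_{\mathrm{ETEL}}$ maximizes the objective function $$\ln\hat L(\theta)=-\ln\Big(n^{-1}\sum_i\exp\big(\hat\lambda'(g_i-\hat g)\big)\Big),$$ where $\hat\lambda=\hat\lambda(\theta)$ is such that $n^{-1}\sum_i\exp(\hat\lambda'g_i)g_i=0$. Moreover, the first-order conditions for $\hat\theta_{\mathrm{ETEL}}$ can be written as $$n^{-1}\sum_i(1-n\hat w_i)\frac{d(\hat\lambda'g_i)}{d\theta'}=0,$$ where the total derivative indicates that $\hat\lambda=\hat\lambda(\theta)$ is allowed to vary with $\theta$, and $\hat w_i=\exp(\hat\lambda'g_i)/\sum_j\exp(\hat\lambda'g_j)$.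
   Context: The ETEL estimator is defined by $\hat\theta=\arg\min_\theta n^{-1}\sum_i\big(-\ln(n\hat w_i(\theta))\big)$, where $(\hat w_i(\theta))_{i=1}^n$ solves $\min_{w_1,\dots,w_n} n^{-1}\sum_i nw_i\ln(nw_i)$ subject to $\sum_i w_i g(x_i,\theta)=0$ and $\sum_i w_i=1$. Equivalently (dual form), $\hat w_i(\theta)=\exp(\hat\lambda(\theta)'g(x_i,\theta))/\sum_j\exp(\hat\lambda(\theta)'g(x_j,\theta))$ with $\hat\lambda(\theta)=\arg\max_{\lambda\in\mathbb{R}^{N_g}} n^{-1}\sum_i\big(-\exp(\lambda'g(x_i,\theta))\big)$. *)

From mathcomp Require Import all_boot all_order all_algebra.
From mathcomp Require Import all_classical all_reals all_analysis.
Set Implicit Arguments. Unset Strict Implicit. Unset Printing Implicit Defensive.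
Import Order.TTheory GRing.Theory Num.Theory.
Import numFieldNormedType.Exports.
Local Open Scope ring_scope.

Definition dotv (R : ringType) (k : nat) (a b : 'rV[R]_k) : R := (a *m b^T) 0 0.

Section ETELDefs.
Variables (R : realType) (X : Type) (n Ng Nt : nat).
Variables (x : 'I_n -> X) (g : X -> 'rV[R]_Nt -> 'rV[R]_Ng).

Definition gbar (th : 'rV[R]_Nt) : 'rV[R]_Ng := n%:R^-1 *: \sum_(i < n) g (x i) th.

Definition dual_obj (th : 'rV[R]_Nt) (l : 'rV[R]_Ng) : R :=
  n%:R^-1 * \sum_(i < n) - expR (dotv l (g (x i) th)).

Definition is_lamhat (th : 'rV[R]_Nt) (l : 'rV[R]_Ng) : Prop :=
  forall l' : 'rV[R]_Ng, dual_obj th l' <= dual_obj th l.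

Definition what (lam : 'rV[R]_Nt -> 'rV[R]_Ng) (th : 'rV[R]_Nt) (i : 'I_n) : R :=
  expR (dotv (lam th) (g (x i) th)) /
  \sum_(j < n) expR (dotv (lam th) (g (x j) th)).

Definition etel_obj (lam : 'rV[R]_Nt -> 'rV[R]_Ng) (th : 'rV[R]_Nt) : R :=
  n%:R^-1 * \sum_(i < n) - ln (n%:R * what lam th i).

Definition lnLhat (lam : 'rV[R]_Nt -> 'rV[R]_Ng) (th : 'rV[R]_Nt) : R :=
  - ln (n%:R^-1 * \sum_(i < n) expR (dotv (lam th) (g (x i) th - gbar th))).

End ETELDefs.

From HB Require Import structures.
From mathcomp Require Import all_boot all_order all_algebra.
From mathcomp Require Import all_classical all_reals all_analysis.
From mathcomp Require Import ring lra.

(* Write u_i = lambda(theta)'g_i and S = sum_i exp u_i.  Centring by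
   lambda'ghat multiplies every exp u_i by the same factor, so
   ln Lhat = ln n + mean(u) - ln S, and since ln (n w_i) = ln n + u_i - ln S the
   ETEL criterion is exactly - ln Lhat: the two estimators coincide.
   Differentiating, d ln S = sum_i w_i du_i, which gives the first-order
   conditions; at an interior maximum they follow from Fermat's rule along
   each direction v.  The same rule applied to the dual objective along the
   coordinate directions is the moment condition defining lambda-hat. *)

Set Implicit Arguments.
Unset Strict Implicit.
Unset Printing Implicit Defensive.
Import Order.TTheory GRing.Theory Num.Theory.
Import numFieldNormedType.Exports.
Local Open Scope classical_set_scope.
Local Open Scope ring_scope.

Lemma dotv_is_linear (R : comNzRingType) k (l : 'rV[R]_k) :
  linear_for *%R (dotv l).
Proof. by move=> c b b'; rewrite /dotv linearP /= mulmxDr -scalemxAr !mxE. Qed.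

HB.instance Definition _ (R : comNzRingType) k (l : 'rV[R]_k) :=
  GRing.isLinear.Build R 'rV[R]_k R *%R (dotv l) (@dotv_is_linear R k l).

Lemma dotvE (R : nzRingType) k (a b : 'rV[R]_k) :
  dotv a b = \sum_(j < k) a 0 j * b 0 j.
Proof. by rewrite /dotv mxE; apply: eq_bigr => j _; rewrite mxE. Qed.

Lemma dotv_delta (R : nzRingType) k (j : 'I_k) (b : 'rV[R]_k) :
  dotv (delta_mx 0 j) b = b 0 j.
Proof. by rewrite /dotv -rowE !mxE. Qed.

Section DirectionalDerivative.
Variables (R : realType) (V : normedModType R).
Implicit Types (f : V -> R) (a v : V).

Lemma is_derive_lineP f a v df :
  is_derive a v f df <-> is_derive (0 : R) 1 (fun h : R => f (h *: v + a)) df.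
Proof.
have same_quotient : 'D_1 (fun h : R => f (h *: v + a)) 0 = 'D_v f a.
  rewrite /derive; do 2 f_equal; apply/funext => h /=.
  by rewrite addr0 scale0r add0r [_%:A]mulr1.
split=> -[fd <-]; apply: DeriveDef => //.
- exact: (derivable1P f a v).1 fd.
- exact: (derivable1P f a v).2 fd.
Qed.

Lemma is_derive_comp1 f (h : R -> R) a v df dh :
  is_derive a v f df -> is_derive (f a) 1 h dh -> is_derive a v (h \o f) (dh * df).
Proof.
move=> /is_derive_lineP fd hd; apply/is_derive_lineP.
by apply: is_derive1_comp fd; rewrite /= scale0r add0r.
Qed.

Lemma is_derive_mx_coord m k (M : V -> 'M[R]_(m, k)) a v dM i j :
  is_derive a v M dM -> is_derive a v (fun t => M t i j) (dM i j).
Proof.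
case=> Md <-; apply: DeriveDef; first exact: (derivable_mxP M a v).1 Md i j.
by rewrite derive_mx // mxE.
Qed.

Lemma is_derive_dotv k (L B : V -> 'rV[R]_k) a v dL dB :
  is_derive a v L dL -> is_derive a v B dB ->
  is_derive a v (fun t => dotv (L t) (B t)) (dotv dL (B a) + dotv (L a) dB).
Proof.
move=> Ld Bd.
have -> : (fun t => dotv (L t) (B t)) = \sum_(j < k) ((fun t => L t 0 j) * (fun t => B t 0 j)).
  by apply/funext => t; rewrite dotvE fct_sumE.
apply: is_derive_eq.
  by apply: is_derive_sum => j; apply: is_deriveM; apply: is_derive_mx_coord.
rewrite !dotvE -big_split; apply: eq_bigr => j _ /=.
by rewrite [RHS]addrC; congr (_ + _); exact: mulrC.
Qed.

Lemma is_derive_local_max f a v df :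
  is_derive a v f df -> (\forall t \near a, f t <= f a) -> df = 0.
Proof.
move=> [fv <-] fmax.
set q := fun h : R => h^-1 *: ((f \o shift a) (h *: v) - f a).
have q_cvg : q @ 0^' --> 'D_v f a := fv.
have line_max : \forall h \near (0 : R), f (h *: v + a) <= f a.
  have line_cvg : (fun h : R => h *: v + a) @ (0 : R) --> a.
    rewrite -[X in _ --> X]add0r -[X in X + a](scale0r v).
    by apply: cvgD; [exact: scalel_continuous | exact: cvg_cst].
  exact: line_cvg _ fmax.
apply/eqP; rewrite eq_le; apply/andP; split.
- apply: (@cvgr_to_le _ (0 : R)^'+ _ _ q).
    apply: cvg_trans q_cvg; apply: cvg_fmap2.
    by apply: within_subset => h; exact: lt0r_neq0.
  near=> h; rewrite /q; apply: mulr_ge0_le0.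
    by rewrite invr_ge0 ltW //; near: h; exact: nbhs_right_gt.
  by rewrite subr_le0 /=; near: h; exact: cvg_within line_max.
- apply: (@cvgr_to_ge _ (0 : R)^'- _ _ q).
    apply: cvg_trans q_cvg; apply: cvg_fmap2.
    by apply: within_subset => h; exact: ltr0_neq0.
  near=> h; rewrite /q; apply: mulr_le0.
    by rewrite invr_le0 ltW //; near: h; exact: nbhs_left_lt.
  by rewrite subr_le0 /=; near: h; exact: cvg_within line_max.
Unshelve. all: by end_near. Qed.

End DirectionalDerivative.

Section LogSumExp.
Variables (R : realType) (n : nat).
Hypothesis n_gt0 : (0 < n)%N.
Implicit Type u : 'I_n -> R.

Lemma sum_expR_gt0 u : 0 < \sum_(i < n) expR (u i).
Proof.
rewrite (bigD1 (Ordinal n_gt0)) //= ltr_pwDl ?expR_gt0 //.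
by apply: sumr_ge0 => i _; exact: expR_ge0.
Qed.

Lemma ln_mean_expR_centred u :
  ln (n%:R^-1 * \sum_(i < n) expR (u i - n%:R^-1 * \sum_(j < n) u j)) =
  ln (\sum_(i < n) expR (u i)) - n%:R^-1 * \sum_(i < n) u i - ln n%:R.
Proof.
under eq_bigr do rewrite expRB.
have S_gt0 := sum_expR_gt0 u; have n_pos : 0 < n%:R :> R by rewrite ltr0n.
rewrite -mulr_suml lnM ?posrE ?invr_gt0 ?divr_gt0 ?expR_gt0 //.
rewrite ln_div ?posrE ?expR_gt0 // expRK lnV ?posrE //.
by rewrite addrC.
Qed.

Lemma mean_ln_softmax u :
  n%:R^-1 * \sum_(i < n) ln (n%:R * (expR (u i) / \sum_(j < n) expR (u j))) =
  ln n%:R + n%:R^-1 * \sum_(i < n) u i - ln (\sum_(i < n) expR (u i)).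
Proof.
set S := \sum_(j < n) expR (u j).
have S_gt0 : 0 < S := sum_expR_gt0 u; have n_pos : 0 < n%:R :> R by rewrite ltr0n.
have ln_term i : ln (n%:R * (expR (u i) / S)) = ln n%:R + (u i - ln S).
  by rewrite lnM ?posrE ?divr_gt0 ?expR_gt0 // ln_div ?posrE ?expR_gt0 // expRK.
under eq_bigr do rewrite ln_term.
rewrite !big_split /= sumrN !sumr_const card_ord.
rewrite -[ln n%:R *+ n]mulr_natl -[ln S *+ n]mulr_natl.
by field; rewrite gt_eqF.
Qed.

Lemma is_derive_ln_sum_expR (V : normedModType R) (u : 'I_n -> V -> R) a v du :
  (forall i, is_derive a v (u i) (du i)) ->
  is_derive a v (fun t => ln (\sum_(i < n) expR (u i t)))
    (\sum_(i < n) expR (u i a) / (\sum_(j < n) expR (u j a)) * du i).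
Proof.
move=> ud.
have Sd : is_derive a v (\sum_(i < n) (expR \o u i)) (\sum_(i < n) expR (u i a) * du i).
  by apply: is_derive_sum => i; exact: is_derive_comp1 (ud i) (is_derive_expR _).
have S_gt0 : 0 < (\sum_(i < n) (expR \o u i)) a by rewrite fct_sumE; exact: sum_expR_gt0.
have := is_derive_comp1 Sd (is_derive1_ln S_gt0).
rewrite [X in is_derive _ _ X _ -> _](_ : _ = fun t => ln (\sum_(i < n) expR (u i t))).
  move=> ld; apply: is_derive_eq ld _.
  rewrite !fct_sumE mulr_sumr; apply: eq_bigr => i _ /=.
  by rewrite mulrA [_^-1 * _]mulrC.
by apply/funext => t /=; rewrite fct_sumE.
Qed.

End LogSumExp.

Section ETEL.
Variables (R : realType) (X : Type) (n Ng Nt : nat).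
Variables (x : 'I_n -> X) (g : X -> 'rV[R]_Nt -> 'rV[R]_Ng).
Hypothesis n_gt0 : (0 < n)%N.

Lemma is_lamhat_moment th l : is_lamhat x g th l ->
  n%:R^-1 *: \sum_(i < n) (expR (dotv l (g (x i) th)) *: g (x i) th) = 0.
Proof.
move=> l_max; apply/rowP => k; rewrite !mxE summxE.
have dual_d : is_derive l (delta_mx 0 k) (dual_obj x g th)
    (n%:R^-1 * \sum_(i < n) - (expR (dotv l (g (x i) th)) * g (x i) th 0 k)).
  have -> : dual_obj x g th =
      n%:R^-1 \*: \sum_(i < n) - (expR \o (fun l => dotv l (g (x i) th))).
    by apply/funext => l'; rewrite /dual_obj /= fct_sumE.
  apply: is_deriveZ; apply: is_derive_sum => i; apply: is_deriveN.
  apply: is_derive_eq.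
    apply: is_derive_comp1 (is_derive_expR _).
    exact: is_derive_dotv (is_derive_id _ _) (is_derive_cst _ _ _).
  by rewrite linear0 addr0 dotv_delta.
have l_local_max : \forall l' \near l, dual_obj x g th l' <= dual_obj x g th l.
  by apply: filterE; exact: l_max.
have := is_derive_local_max dual_d l_local_max.
rewrite sumrN mulrN => /eqP; rewrite oppr_eq0 => /eqP moment0.
by rewrite -[RHS]moment0; congr (_ * _); apply: eq_bigr => i _; rewrite mxE.
Qed.

Variable lam : 'rV[R]_Nt -> 'rV[R]_Ng.
Let u i t := dotv (lam t) (g (x i) t).

Lemma lnLhatE t :
  lnLhat x g lam t = ln n%:R + n%:R^-1 * \sum_(i < n) u i t - ln (\sum_(i < n) expR (u i t)).
Proof.
rewrite /lnLhat /gbar.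
under eq_bigr do rewrite linearB linearZ linear_sum.
rewrite ln_mean_expR_centred //; lra.
Qed.

Lemma etel_objE t : etel_obj x g lam t = - lnLhat x g lam t.
Proof. by rewrite lnLhatE /etel_obj /what -mean_ln_softmax // sumrN mulrN. Qed.

Lemma is_derive_lnLhat t v :
  differentiable lam t -> (forall i, differentiable (g (x i)) t) ->
  is_derive t v (lnLhat x g lam)
    (n%:R^-1 * \sum_(i < n) (1 - n%:R * what x g lam t i) * 'D_v (u i) t).
Proof.
move=> lam_d g_d.
have u_d i : is_derive t v (u i) ('D_v (u i) t).
  have lam_v := derivableP (diff_derivable (v := v) lam_d).
  have g_v := derivableP (diff_derivable (v := v) (g_d i)).
  by case: (is_derive_dotv lam_v g_v) => /derivableP.
have -> : lnLhat x g lam = cst (ln n%:R) + n%:R^-1 \*: \sum_(i < n) u i -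
    (fun t => ln (\sum_(i < n) expR (u i t))).
  by apply/funext => t'; rewrite lnLhatE /= fct_sumE.
apply: is_derive_eq.
  exact: is_deriveB (is_derive_ln_sum_expR n_gt0 u_d).
rewrite add0r scaler_sumr mulr_sumr -sumrB; apply: eq_bigr => i _ /=.
rewrite /what /u -[n%:R^-1 *: _]/(n%:R^-1 * _); field.
by rewrite gt_eqF ?sum_expR_gt0 // pnatr_eq0 -lt0n.
Qed.

End ETEL.

Theorem theorem2 (R : realType) (X : Type) (n Ng Nt : nat) (x : 'I_n -> X)
  (g : X -> 'rV[R]_Nt -> 'rV[R]_Ng) (Theta : set 'rV[R]_Nt)
  (lam : 'rV[R]_Nt -> 'rV[R]_Ng) :
  (0 < n)%N ->
  (forall th, Theta th -> is_lamhat x g th (lam th)) ->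
  [/\ (* lambda-hat solves n^-1 sum_i exp(lambda'g_i) g_i = 0 *)
      (forall th, Theta th ->
         n%:R^-1 *: \sum_(i < n) (expR (dotv (lam th) (g (x i) th)) *: g (x i) th) = 0),
      (* theta-hat is an ETEL estimator iff it maximizes ln Lhat over Theta *)
      (forall th_hat,
         (Theta th_hat /\ forall th, Theta th -> etel_obj x g lam th_hat <= etel_obj x g lam th)
         <->
         (Theta th_hat /\ forall th, Theta th -> lnLhat x g lam th <= lnLhat x g lam th_hat)),
      (* the derivative of ln Lhat is n^-1 sum_i (1 - n w_i) d(lambda'g_i)/dtheta *)
      (forall th, nbhs th Theta -> differentiable lam th ->
         (forall i, differentiable (g (x i)) th) ->
         forall v : 'rV[R]_Nt,
           'D_v (lnLhat x g lam) th =
           n%:R^-1 * \sum_(i < n) (1 - n%:R * what x g lam th i) *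
                       'D_v (fun t => dotv (lam t) (g (x i) t)) th) &
      (* first-order conditions at an interior maximizer *)
      (forall th_hat, nbhs th_hat Theta ->
         (forall th, Theta th -> lnLhat x g lam th <= lnLhat x g lam th_hat) ->
         differentiable lam th_hat ->
         (forall i, differentiable (g (x i)) th_hat) ->
         forall v : 'rV[R]_Nt,
           n%:R^-1 * \sum_(i < n) (1 - n%:R * what x g lam th_hat i) *
                       'D_v (fun t => dotv (lam t) (g (x i) t)) th_hat = 0)].
Proof.
move=> n_gt0 lam_max; split.
- by move=> th /lam_max /is_lamhat_moment.
- have etel_le th th' : (etel_obj x g lam th <= etel_obj x g lam th') =
      (lnLhat x g lam th' <= lnLhat x g lam th).
    by rewrite etel_objE ?etel_objE // lerN2.
  by move=> th_hat; split=> -[Th opt]; split=> [|th /opt]; rewrite ?etel_le.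
- by move=> th _ lam_d g_d v; have [_ ->] := is_derive_lnLhat n_gt0 v lam_d g_d.
- move=> th_hat Th_nbhs th_max lam_d g_d v.
  apply: is_derive_local_max (is_derive_lnLhat n_gt0 v lam_d g_d) _.
  exact: filterS th_max Th_nbhs.
Qed.
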